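(* Let $\mathcal{D}$ be a distribution on $\mathbb{R}^d$, $f,h:\mathbb{R}^d\to\{0,1\}$ with $f$ a linear threshold function and $h$ a hypothesis, $q\ge2$, $k\in\{1,\dots,q-1\}$. Suppose $0<\mathrm{BagErr}_{\mathrm{oracle}}(h,f,\mathcal{D},q,k)\le\varepsilon'<1/(4q)$ and let $\varepsilon=4\varepsilon'$. Then (i) if $k\neq q/2$, $\Pr_{\mathbf{x}\sim\mathcal{D}}[f(\mathbf{x})\neq h(\mathbf{x})]\le\varepsilon$; and (ii) if $k=q/2$, $\Pr_{\mathbf{x}\sim\mathcal{D}}[f(\mathbf{x})\neq h(\mathbf{x})]\le\varepsilon$ or $\Pr_{\mathbf{x}\sim\mathcal{D}}[f(\mathbf{x})\neq1-h(\mathbf{x})]\le\varepsilon$.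
   Context: The bag oracle $\mathrm{Ex}(f,\mathcal{D},q,k)$ (defined for $1\le k\le q-1$, with both events $f=0,f=1$ of positive probability) returns a bag of $q$ independent points, $k$ drawn from $\mathcal{D}$ conditioned on $f=1$ and $q-k$ from $\mathcal{D}$ conditioned on $f=0$. $\mathrm{BagErr}_{\mathrm{oracle}}(h,f,\mathcal{D},q,k):=\Pr_{B\sim\mathrm{Ex}(f,\mathcal{D},q,k)}[\mathrm{Avg}\{h(\mathbf{x}):\mathbf{x}\in B\}\neq k/q]$. *)

From HB Require Import structures.
From mathcomp Require Import all_boot all_order all_algebra.
From mathcomp Require Import all_classical all_reals all_analysis.
Set Implicit Arguments. Unset Strict Implicit. Unset Printing Implicit Defensive.
Import Order.TTheory GRing.Theory Num.Theory.
Import numFieldNormedType.Exports.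
Local Open Scope classical_set_scope.
Local Open Scope ring_scope.

Definition Rd (R : realType) (d : nat) : measurableType _ :=
  g_sigma_algebraType (@open 'rV[R]_d).

Definition is_LTF (R : realType) (d : nat) (f : 'rV[R]_d -> bool) : Prop :=
  exists (w : 'rV[R]_d) (theta : R),
    forall x : 'rV[R]_d, f x = (theta <= \sum_(i < d) w ord0 i * x ord0 i).

Definition prD (R : realType) (d : nat) (D : probability (Rd R d) R)
  (A : set 'rV[R]_d) : R := fine (D A).

Definition condPr (R : realType) (d : nat) (D : probability (Rd R d) R)
  (f : 'rV[R]_d -> bool) (c : bool) (A : set 'rV[R]_d) : R :=
  prD D (A `&` [set x | f x = c]) / prD D [set x | f x = c].

(* BagErr_oracle(h,f,D,q,k): the bag B = (x_0,...,x_{q-1}) has independent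
   points, x_i ~ D|f=1 for i < k and x_i ~ D|f=0 for k <= i < q.  Since the
   event Avg{h(x) : x in B} <> k/q only depends on the vector of labels
   (h(x_0),...,h(x_{q-1})), its probability is the sum, over label vectors
   b with average <> k/q, of the product of the independent marginals
   Pr_{x_i}[h(x_i) = b_i]. *)
Definition BagErr_oracle (R : realType) (d : nat) (h f : 'rV[R]_d -> bool)
  (D : probability (Rd R d) R) (q k : nat) : R :=
  \sum_(b : {ffun 'I_q -> bool} |
          (\sum_(i < q) ((b i : nat)%:R : R)) / q%:R != k%:R / q%:R)
    \prod_(i < q) condPr D f (i < k)%N [set x | h x = b i].

From HB Require Import structures.
From mathcomp Require Import all_boot all_order all_algebra.
From mathcomp Require Import all_classical all_reals all_analysis.
From mathcomp Require Import lra zify.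
Set Implicit Arguments. Unset Strict Implicit. Unset Printing Implicit Defensive.
Import Order.TTheory GRing.Theory Num.Theory.
Import numFieldNormedType.Exports.
Local Open Scope classical_set_scope.
Local Open Scope ring_scope.

(* Let w_i(v) be the probability that the i-th point of the bag gets h-label v;
   it only depends on the class of the point.  The bag error is the mass, under
   the product of the w_i, of the label vectors whose number of ones is not k.
   Flipping coordinate i maps every vector with k ones to one without, so the
   vectors with k ones have mass at most max_v w_i(v): each point has a label
   v_i of probability at least 1 - eps'.  The vector (v_i) then has probability
   at least (1 - eps')^q >= 1 - q eps' > eps', so it is not an error vector and
   has exactly k ones.  As v_i is v_1 on the k positive points and v_0 on the
   q - k negative ones, (v_1, v_0) = (1, 0), or (v_1, v_0) = (0, 1) and q = 2k.
   In the first case Pr[f <> h] = sum_c Pr[f = c, h <> c] <= eps', and in the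
   second case the same bound holds for 1 - h. *)

Lemma bernoulli_ineq (R : realDomainType) (e : R) n :
  0 <= e <= 1 -> 1 - n%:R * e <= (1 - e) ^+ n.
Proof.
move=> /andP [e_ge0 e_le1]; elim: n => [|n IHn]; first by rewrite mul0r subr0 expr0.
have onem_ge0 : 0 <= 1 - e by rewrite subr_ge0.
have := ler_wpM2l onem_ge0 IHn.
have : 0 <= n%:R * e * e by rewrite !mulr_ge0.
rewrite exprS mulrSr; lra.
Qed.

Section LabelVectors.
Variables (R : realFieldType) (q : nat) (w : 'I_q -> bool -> R).
Hypothesis w_ge0 : forall i v, 0 <= w i v.
Hypothesis w_sum1 : forall i, w i true + w i false = 1.

Definition label_weight (b : {ffun 'I_q -> bool}) : R := \prod_(i < q) w i (b i).

Definition ones (b : {ffun 'I_q -> bool}) : nat := \sum_(i < q) b i.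

Definition flip_label (i : 'I_q) (b : {ffun 'I_q -> bool}) : {ffun 'I_q -> bool} :=
  [ffun j => (j == i) (+) b j].

Lemma flip_labelK i : involutive (flip_label i).
Proof. by move=> b; apply/ffunP=> j; rewrite !ffunE addbA addbb. Qed.

Lemma ones_flip_label i b : ones (flip_label i b) != ones b.
Proof.
rewrite /ones (bigD1 i) // [X in _ != X](bigD1 i) //= ffunE eqxx.
rewrite (eq_bigr (fun j => b j : nat)) => [|j /negbTE ji]; last by rewrite ffunE ji.
by case: (b i); rewrite /= eqn_add2r.
Qed.

Lemma label_weight_ge0 b : 0 <= label_weight b.
Proof. exact: prodr_ge0. Qed.

Lemma sum_label_weight : \sum_b label_weight b = 1.
Proof.
rewrite /label_weight -(bigA_distr_bigA (fun i (v : bool) => w i v)) /=.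
by apply: big1 => i _; rewrite big_bool /= w_sum1.
Qed.

Lemma label_weight_flipD i b :
  label_weight b + label_weight (flip_label i b) = \prod_(j < q | j != i) w j (b j).
Proof.
rewrite /label_weight (bigD1 i) //= [X in _ + X](bigD1 i) //= ffunE eqxx.
rewrite [X in _ + _ * X](eq_bigr (fun j => w j (b j))) => [|j /negbTE ji]; last first.
  by rewrite ffunE ji.
by rewrite -mulrDl; case: (b i); rewrite /= ?[w i false + _]addrC w_sum1 mul1r.
Qed.

Lemma mass_flip_le i (k : nat) :
  \sum_(b | ones b == k) label_weight (flip_label i b) <=
  \sum_(b | ones b != k) label_weight b.
Proof.
rewrite (reindex_inj (can_inj (flip_labelK i))) /=.
rewrite [X in _ <= X]big_mkcond [X in X <= _]big_mkcond /=.
apply: ler_sum => b _; rewrite flip_labelK.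
case: eqP => [<-|_]; last by case: ifP => // _; apply: label_weight_ge0.
by rewrite eq_sym ones_flip_label.
Qed.

Lemma sum_label_weight_ones (k : nat) :
  \sum_(b | ones b == k) label_weight b + \sum_(b | ones b != k) label_weight b = 1.
Proof. by rewrite -sum_label_weight [RHS](bigID (fun b => ones b == k)). Qed.

Lemma mass_ones_le_max i (k : nat) :
  \sum_(b | ones b == k) label_weight b <= Num.max (w i true) (w i false).
Proof.
set m := Num.max _ _.
have m_ge0 : 0 <= m by rewrite le_max w_ge0.
have w_le_m v : w i v <= m by rewrite le_max; case: v; rewrite lexx ?orbT.
rewrite -[X in _ <= X]mulr1 -(sum_label_weight_ones k) mulrDr.
apply: le_trans (lerD (lexx _) (ler_wpM2l m_ge0 (mass_flip_le i k))).
rewrite -mulrDr -big_split mulr_sumr /=; apply: ler_sum => b _.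
rewrite label_weight_flipD /label_weight (bigD1 i) //=.
by apply: ler_wpM2r; [apply: prodr_ge0 | apply: w_le_m].
Qed.

Lemma exists_likely_label (k : nat) e i :
  \sum_(b | ones b != k) label_weight b <= e -> exists v, 1 - e <= w i v.
Proof.
move=> bad_le.
have good_ge : 1 - e <= \sum_(b | ones b == k) label_weight b.
  by move: bad_le (sum_label_weight_ones k); lra.
have := le_trans good_ge (mass_ones_le_max i k).
by rewrite le_max => /orP [] ?; [exists true | exists false].
Qed.

Lemma likely_labels_ones (k : nat) e (bs : {ffun 'I_q -> bool}) :
  e * q.+1%:R < 1 -> \sum_(b | ones b != k) label_weight b <= e ->
  (forall i, 1 - e <= w i (bs i)) -> ones bs = k.
Proof.
move=> e_small bad_le bs_likely; apply/eqP/negPn/negP => bs_bad.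
have bs_le : label_weight bs <= e.
  apply: le_trans bad_le; rewrite (bigD1 bs) //= lerDl.
  by apply: sumr_ge0 => b _; apply: label_weight_ge0.
have e_ge0 : 0 <= e := le_trans (label_weight_ge0 bs) bs_le.
have e_le1 : e <= 1.
  by move: e_small (mulr_ge0 e_ge0 (ler0n R q)); rewrite mulrSr; lra.
have bs_ge : (1 - e) ^+ q <= label_weight bs.
  rewrite -[q in X in X <= _]card_ord -prodr_const; apply: ler_prod => i _.
  by rewrite bs_likely andbT; lra.
have := bernoulli_ineq q (introT andP (conj e_ge0 e_le1)).
move: e_small bs_ge bs_le; rewrite mulrSr; lra.
Qed.

End LabelVectors.

Lemma ones_two_block q k v1 v0 : (k <= q)%N ->
  ones [ffun i : 'I_q => if (i < k)%N then v1 else v0] = (k * v1 + (q - k) * v0)%N.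
Proof.
move=> k_le_q; rewrite /ones (eq_bigr (fun i : 'I_q => if (i < k)%N then v1 : nat else v0)).
  rewrite -(big_mkord xpredT (fun i => if (i < k)%N then v1 : nat else v0)).
  rewrite (@big_cat_nat _ _ _ k 0 q _ _ (leq0n k) k_le_q) /=.
  rewrite (@eq_big_nat _ _ _ 0 k _ (fun=> v1 : nat)) => [|i /andP [_ ->]] //.
  rewrite (@eq_big_nat _ _ _ k q _ (fun=> v0 : nat)) => [|i /andP [ki _]]; last first.
    by rewrite ltnNge ki.
  by rewrite !sum_nat_const_nat subn0 mulnC [((q - k) * _)%N]mulnC.
by move=> i _; rewrite ffunE; case: (i < k)%N.
Qed.

Lemma two_block_ones_eq q k (v1 v0 : bool) : (0 < k)%N -> (k < q)%N ->
  (k * v1 + (q - k) * v0)%N = k ->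
  (v1, v0) = (true, false) \/ (v1, v0) = (false, true) /\ q = k.*2.
Proof.
move=> k_gt0 k_lt_q; rewrite -addnn.
by case: v1 v0 => [] [] /= ?; [lia | left | right; split => //; lia | lia].
Qed.

Lemma two_block_likely_labels (R : realFieldType) q k (p : bool -> bool -> R) e :
  (0 < k)%N -> (k < q)%N ->
  (forall c v, 0 <= p c v) -> (forall c, p c true + p c false = 1) ->
  e * q.+1%:R < 1 ->
  \sum_(b : {ffun 'I_q -> bool} | ones b != k)
    label_weight (fun i v => p (i < k)%N v) b <= e ->
  (forall c, 1 - e <= p c c) \/ (forall c, 1 - e <= p c (~~ c)) /\ q = k.*2.
Proof.
move=> k_gt0 k_lt_q p_ge0 p_sum1 e_small bad_le.
pose w (i : 'I_q) v := p (i < k)%N v.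
have w_ge0 i v : 0 <= w i v by apply: p_ge0.
have w_sum1 i : w i true + w i false = 1 by apply: p_sum1.
have likely c : exists v, 1 - e <= p c v.
  have q_gt0 := ltn_trans k_gt0 k_lt_q.
  (* position 0 of the bag holds a positive point, position k a negative one *)
  case: c; [ have [v] := exists_likely_label w_ge0 w_sum1 (Ordinal q_gt0) bad_le
           | have [v] := exists_likely_label w_ge0 w_sum1 (Ordinal k_lt_q) bad_le ];
  by rewrite /w /= ?k_gt0 ?ltnn; exists v.
have [v1 likely1] := likely true; have [v0 likely0] := likely false.
pose bs := [ffun i : 'I_q => if (i < k)%N then v1 else v0].
have bs_likely i : 1 - e <= w i (bs i) by rewrite /w ffunE; case: (i < k)%N.
have := likely_labels_ones w_ge0 e_small bad_le bs_likely.
rewrite ones_two_block; last exact: ltnW.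
case/(two_block_ones_eq k_gt0 k_lt_q) => [[? ?] | [[? ?] q_eq]]; subst v1 v0.
- by left => -[].
- by right; split => // -[].
Qed.

Lemma setC_fiber_bool (T : Type) (g : T -> bool) c :
  ~` [set x | g x = c] = [set x | g x = ~~ c].
Proof. by apply/seteqP; split => x /=; case: (g x); case: c. Qed.

Lemma fiber_negb (T : Type) (g : T -> bool) c :
  [set x | ~~ g x = c] = [set x | g x = ~~ c].
Proof. by apply/seteqP; split => x /=; case: (g x); case: c. Qed.

Lemma measurable_fiber_bool d (T : measurableType d) (g : T -> bool) c :
  measurable [set x | g x = true] -> measurable [set x | g x = c].
Proof.
move=> mg; case: c => //.
by rewrite -[false]/(~~ true) -setC_fiber_bool; apply: measurableC.
Qed.

Lemma closed_LTF (R : realType) d (f : 'rV[R]_d -> bool) :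
  is_LTF f -> closed [set x | f x = true].
Proof.
move=> [w [th fE]].
have -> : [set x | f x = true] =
    (fun x => \sum_(i < d) w ord0 i * x ord0 i) @^-1` [set y | th <= y].
  by apply/seteqP; split => x /=; rewrite fE.
apply: (proj1 (continuous_closedP _)); last exact: closed_ge.
apply: continuous_big => [|i _ x]; first exact: add_continuous.
by apply: continuousM; [exact: cst_continuous | exact: coord_continuous].
Qed.

Lemma measurable_LTF (R : realType) d (f : 'rV[R]_d -> bool) c :
  is_LTF f -> measurable ([set x | f x = c] : set (Rd R d)).
Proof.
move=> /closed_LTF f_closed; apply: measurable_fiber_bool.
rewrite -[X in measurable X]setCK; apply: measurableC.
by apply: sub_gen_smallest; apply: closed_openC.
Qed.

Section Disagreement.
Variables (R : realType) (d : nat) (D : probability (Rd R d) R).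
Implicit Types (A B : set (Rd R d)) (f g : 'rV[R]_d -> bool).

Lemma prD_ge0 A : 0 <= prD D A.
Proof. exact/fine_ge0/measure_ge0. Qed.

Lemma prD_gt0 A : measurable A -> (0 < D A)%E -> 0 < prD D A.
Proof. by move=> mA DA_gt0; rewrite fine_gt0 // DA_gt0 ltey_eq fin_num_measure. Qed.

Lemma prD_setU A B : measurable A -> measurable B -> A `&` B = set0 ->
  prD D (A `|` B) = prD D A + prD D B.
Proof. by move=> mA mB AB0; rewrite /prD measureU // fineD // fin_num_measure. Qed.

Lemma prD_splitI A B : measurable A -> measurable B ->
  prD D A = prD D (B `&` A) + prD D (~` B `&` A).
Proof.
move=> mA mB; rewrite -prD_setU; first by rewrite -setIUl setUv setTI.
- exact: measurableI.
- by apply: measurableI => //; apply: measurableC.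
- by rewrite setIACA setICr set0I.
Qed.

Lemma prD_fiber_sum g : measurable ([set x | g x = true] : set (Rd R d)) ->
  prD D [set x | g x = true] + prD D [set x | g x = false] = 1.
Proof.
move=> mg; rewrite [X in _ = X](_ : 1 = prD D setT); last by rewrite /prD probability_setT.
by rewrite (prD_splitI measurableT mg) !setIT setC_fiber_bool.
Qed.

Lemma prD_fiber_split f g c v :
  measurable ([set x | f x = c] : set (Rd R d)) ->
  measurable ([set x | g x = v] : set (Rd R d)) ->
  prD D [set x | f x = c] =
  prD D ([set x | g x = v] `&` [set x | f x = c]) +
  prD D ([set x | g x = ~~ v] `&` [set x | f x = c]).
Proof. by move=> mf mg; rewrite (prD_splitI mf mg) setC_fiber_bool. Qed.

Lemma condPr_fiber_sum f g c v :
  measurable ([set x | f x = c] : set (Rd R d)) ->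
  measurable ([set x | g x = v] : set (Rd R d)) ->
  0 < prD D [set x | f x = c] ->
  condPr D f c [set x | g x = v] + condPr D f c [set x | g x = ~~ v] = 1.
Proof.
by move=> mf mg f_gt0; rewrite /condPr -mulrDl -prD_fiber_split // divff ?gt_eqF.
Qed.

Lemma condPr_ge0 f c A : 0 < prD D [set x | f x = c] -> 0 <= condPr D f c A.
Proof. by move=> f_gt0; rewrite divr_ge0 ?prD_ge0 ?ltW. Qed.

Lemma prD_disagree_le f g e :
  (forall c, measurable ([set x | f x = c] : set (Rd R d))) ->
  (forall c, measurable ([set x | g x = c] : set (Rd R d))) ->
  (forall c, 0 < prD D [set x | f x = c]) ->
  (forall c, 1 - e <= condPr D f c [set x | g x = c]) ->
  prD D [set x | f x != g x] <= e.
Proof.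
move=> mf mg f_gt0 g_likely.
have miss c : prD D ([set x | g x = ~~ c] `&` [set x | f x = c]) <=
              e * prD D [set x | f x = c].
  have := g_likely c; rewrite /condPr ler_pdivlMr //.
  by have := prD_fiber_split (mf c) (mg c); lra.
have -> : [set x | f x != g x] =
    ([set x | g x = ~~ true] `&` [set x | f x = true]) `|`
    ([set x | g x = ~~ false] `&` [set x | f x = false]) :> set (Rd R d).
  apply/seteqP; split => x /=; case: (f x); case: (g x) => /=;
  by [left | right | case => -[]].
rewrite prD_setU; first last.
- by apply/seteqP; split => // x [[_ /= ->] [_]].
- exact: measurableI.
- exact: measurableI.
have := congr1 (fun t => e * t) (prD_fiber_sum (mf true)); rewrite /= mulrDr mulr1.
by have := miss true; have := miss false; lra.
Qed.

End Disagreement.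

Lemma BagErr_oracleE (R : realType) d (h f : 'rV[R]_d -> bool)
    (D : probability (Rd R d) R) q k : (0 < q)%N ->
  BagErr_oracle h f D q k =
  \sum_(b : {ffun 'I_q -> bool} | ones b != k)
    label_weight (fun i v => condPr D f (i < k)%N [set x | h x = v]) b.
Proof.
move=> q_gt0; apply: eq_bigl => b.
by rewrite -natr_sum (can_eq (divfK _)) ?eqr_nat // pnatr_eq0 -lt0n.
Qed.

Theorem theorem9 (R : realType) (d : nat) (D : probability (Rd R d) R)
  (f h : 'rV[R]_d -> bool) (q k : nat) (eps' : R) :
  is_LTF f ->
  measurable (h @^-1` [set true] : set (Rd R d)) ->
  (2 <= q)%N -> (1 <= k)%N -> (k <= q - 1)%N ->
  (0 < D [set x | f x = true])%E -> (0 < D [set x | f x = false])%E ->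
  0 < BagErr_oracle h f D q k ->
  BagErr_oracle h f D q k <= eps' ->
  eps' < 1 / (4 * q%:R) ->
  let eps := 4 * eps' in
  (k%:R != q%:R / 2 :> R ->
     prD D [set x | f x != h x] <= eps) /\
  (k%:R = q%:R / 2 :> R ->
     prD D [set x | f x != h x] <= eps \/
     prD D [set x | f x != ~~ h x] <= eps).
Proof.
move=> f_LTF h_meas q_ge2 k_ge1 k_le Df_true Df_false bag_gt0 bag_le eps'_small eps.
have k_lt_q : (k < q)%N by lia.
have mf c := measurable_LTF c f_LTF.
have mh c : measurable ([set x | h x = c] : set (Rd R d)).
  exact: measurable_fiber_bool h_meas.
have f_gt0 c : 0 < prD D [set x | f x = c] by apply: prD_gt0 => //; case: c.
have eps'_ge0 : 0 <= eps' := le_trans (ltW bag_gt0) bag_le.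
have eps'_le_eps : eps' <= eps by rewrite /eps; lra.
have eps'_tiny : eps' * q.+1%:R < 1.
  have : eps' * (4 * q%:R) < 1 by rewrite -ltr_pdivlMr // mulr_gt0 // ltr0n; lia.
  apply: le_lt_trans; apply: ler_wpM2l => //.
  by rewrite -natrM ler_nat; lia.
rewrite BagErr_oracleE in bag_le; last by lia.
have [agree | [flip q_eq]] := two_block_likely_labels k_ge1 k_lt_q
  (fun c v => condPr_ge0 _ (f_gt0 c))
  (fun c => condPr_fiber_sum (mf c) (mh true) (f_gt0 c)) eps'_tiny bag_le.
- have disagree_le : prD D [set x | f x != h x] <= eps.
    exact: le_trans (prD_disagree_le mf mh f_gt0 agree) eps'_le_eps.
  by split=> // _; left.
- have flip_le : prD D [set x | f x != ~~ h x] <= eps.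
    apply: le_trans eps'_le_eps.
    by apply: (prD_disagree_le (g := fun x => ~~ h x)) => // c; rewrite fiber_negb.
  split=> [k_ne | _]; last by right.
  by move: k_ne; rewrite q_eq -muln2 natrM mulfK ?eqxx // pnatr_eq0.
Qed.
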